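(* Let $G$ be a connected graph on $X$. For every $k\ge1$ and every set $A\subseteq X$ with finite edge-boundary $\delta A$, the set $N_k(A)$ is finite.
   Context: A graph on $X$ is an irreflexive symmetric relation $G\subseteq X^2$. For $A\subseteq X$, $\delta A$ is the set of edges with one endpoint in $A$ and the other in $A^c:=X\setminus A$. A cut is a set $A$ with $A$, $A^c$ infinite and $\delta A$ finite; a cut is neat if the induced subgraphs on $A$ and $A^c$ are connected; $\mathcal C_k$ is the set of neat cuts $A$ with $|\delta A|=k$. Sets $A,B$ are nested if one of $A\cap B$, $A\cap B^c$, $A^c\cap B$, $A^c\cap B^c$ is empty. $N_k(A)$ is the set of cuts in $\mathcal C_k$ that are not nested with $A$. *)

From Stdlib Require Import List Relations.
Import ListNotations.

Definition is_graph {X : Type} (G : X -> X -> Prop) : Prop :=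
  (forall x, ~ G x x) /\ (forall x y, G x y -> G y x).

Definition finite_set {T : Type} (P : T -> Prop) : Prop :=
  exists l : list T, forall x, P x -> In x l.

Definition infinite_set {T : Type} (P : T -> Prop) : Prop := ~ finite_set P.

Definition has_card {T : Type} (P : T -> Prop) (n : nat) : Prop :=
  exists l : list T, NoDup l /\ length l = n /\ (forall x, P x <-> In x l).

Definition compl {X : Type} (A : X -> Prop) : X -> Prop := fun x => ~ A x.

(* Edge boundary delta A: each edge {x,y} with x in A, y in A^c is
   represented exactly once, by the ordered pair (x, y). *)
Definition boundary {X : Type} (G : X -> X -> Prop) (A : X -> Prop)
  : X * X -> Prop :=
  fun e => G (fst e) (snd e) /\ A (fst e) /\ ~ A (snd e).

Definition connected {X : Type} (G : X -> X -> Prop) : Prop :=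
  forall x y, clos_refl_trans X G x y.

Definition induced_connected {X : Type} (G : X -> X -> Prop) (A : X -> Prop)
  : Prop :=
  forall x y, A x -> A y ->
    clos_refl_trans X (fun u v => G u v /\ A u /\ A v) x y.

Definition is_cut {X : Type} (G : X -> X -> Prop) (A : X -> Prop) : Prop :=
  infinite_set A /\ infinite_set (compl A) /\ finite_set (boundary G A).

Definition neat_cut {X : Type} (G : X -> X -> Prop) (A : X -> Prop) : Prop :=
  is_cut G A /\ induced_connected G A /\ induced_connected G (compl A).

Definition C_k {X : Type} (G : X -> X -> Prop) (k : nat) (A : X -> Prop)
  : Prop :=
  neat_cut G A /\ has_card (boundary G A) k.

Definition empty_set {X : Type} (P : X -> Prop) : Prop := forall x, ~ P x.

Definition nested {X : Type} (A B : X -> Prop) : Prop :=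
  empty_set (fun x => A x /\ B x) \/
  empty_set (fun x => A x /\ ~ B x) \/
  empty_set (fun x => ~ A x /\ B x) \/
  empty_set (fun x => ~ A x /\ ~ B x).

Definition N_k {X : Type} (G : X -> X -> Prop) (k : nat) (A : X -> Prop)
  : (X -> Prop) -> Prop :=
  fun B => C_k G k B /\ ~ nested A B.

(* A family of subsets of X is finite if finitely many sets cover it,
   up to extensional equality of sets. *)
Definition finite_family {X : Type} (F : (X -> Prop) -> Prop) : Prop :=
  exists L : list (X -> Prop),
    forall B, F B -> exists B', In B' L /\ (forall x, B x <-> B' x).

(* Fix an edge uv. A neat cut B with u in B, v not in B and at most k
   boundary edges is, after deleting uv, either the component of u (when
   uv was its only boundary edge), or it separates the endpoints of some
   edge of a fixed u-v walk avoiding uv, with at most k-1 boundary edges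
   left. Induction on k shows there are finitely many such B.
   Every cut in N_k(A) contains an endpoint of an edge of the finite set
   delta A and misses another one, so it separates the endpoints of an
   edge on one of finitely many walks joining these endpoints. *)

From Stdlib Require Import List Relations Classical Lia.
Import ListNotations.

Definition crosses {X : Type} (P : X -> Prop) (e : X * X) : Prop :=
  P (fst e) /\ ~ P (snd e).

Section Walks.

Variables (X : Type) (R : X -> X -> Prop).

Lemma clos_rt_mono (S : X -> X -> Prop) :
  (forall a b, R a b -> S a b) ->
  forall a b, clos_refl_trans X R a b -> clos_refl_trans X S a b.
Proof.
  intros HRS a b H; induction H; eauto using rt_step, rt_refl, rt_trans.
Qed.

Lemma clos_rt_crossing_edges a b : clos_refl_trans X R a b ->
  exists W : list (X * X), (forall e, In e W -> R (fst e) (snd e)) /\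
    forall P, P a -> ~ P b -> exists e, In e W /\ crosses P e.
Proof.
  induction 1 as [x y Hxy | x | x y z _ [W1 [HR1 HW1]] _ [W2 [HR2 HW2]]].
  - exists [(x, y)]; split.
    + intros e [<- | []]; exact Hxy.
    + intros P Px Py; exists (x, y); split; [left | split]; auto.
  - exists []; split; [intros e [] | intros P Px Px'; contradiction].
  - exists (W1 ++ W2); split.
    + intros e He; apply in_app_or in He as [He | He]; auto.
    + intros P Px Pz; destruct (classic (P y)) as [Py | Py].
      * destruct (HW2 P Py Pz) as [e [He HPe]]; exists e; auto using in_or_app.
      * destruct (HW1 P Px Py) as [e [He HPe]]; exists e; auto using in_or_app.
Qed.

Lemma clos_rt_crossing_edges_list (ps : list (X * X)) :
  (forall p, In p ps -> clos_refl_trans X R (fst p) (snd p)) ->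
  exists W : list (X * X), (forall e, In e W -> R (fst e) (snd e)) /\
    forall p P, In p ps -> crosses P p -> exists e, In e W /\ crosses P e.
Proof.
  induction ps as [| p ps IH]; intros Hps.
  - exists []; split; [intros e [] | intros p P []].
  - destruct (clos_rt_crossing_edges _ _ (Hps p (or_introl eq_refl)))
      as [W1 [HR1 HW1]].
    destruct IH as [W2 [HR2 HW2]]; [intros q Hq; apply Hps; right; exact Hq |].
    exists (W1 ++ W2); split.
    + intros e He; apply in_app_or in He as [He | He]; auto.
    + intros q P [<- | Hq] [Pq Pq'].
      * destruct (HW1 P Pq Pq') as [e [He HPe]]; exists e; auto using in_or_app.
      * destruct (HW2 q P Hq (conj Pq Pq')) as [e [He HPe]].
        exists e; auto using in_or_app.
Qed.

End Walks.

Lemma finite_family_mono {X : Type} (F F' : (X -> Prop) -> Prop) :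
  finite_family F' -> (forall B, F B -> F' B) -> finite_family F.
Proof.
  intros [L HL] H; exists L; intros B HB; exact (HL B (H B HB)).
Qed.

Lemma finite_family_list_union {X I : Type} (is : list I)
  (F : I -> (X -> Prop) -> Prop) :
  (forall i, In i is -> finite_family (F i)) ->
  finite_family (fun B => exists i, In i is /\ F i B).
Proof.
  induction is as [| i is IH]; intros Hfin.
  - exists []; intros B [i [[] _]].
  - destruct (Hfin i (or_introl eq_refl)) as [L1 HL1].
    destruct IH as [L2 HL2]; [intros j Hj; apply Hfin; right; exact Hj |].
    exists (L1 ++ L2); intros B [j [[<- | Hj] HB]].
    + destruct (HL1 B HB) as [B' [? ?]]; exists B'; auto using in_or_app.
    + destruct (HL2 B (ex_intro _ j (conj Hj HB))) as [B' [? ?]].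
      exists B'; auto using in_or_app.
Qed.

Section NeatSeparations.

Variable X : Type.
Implicit Types (G : X -> X -> Prop) (A B : X -> Prop).

Definition boundary_le G B (k : nat) : Prop :=
  exists l : list (X * X), length l <= k /\ forall e, boundary G B e -> In e l.

Definition neat_separation G (k : nat) (u v : X) B : Prop :=
  B u /\ ~ B v /\ induced_connected G B /\ induced_connected G (compl B) /\
  boundary_le G B k.

Definition delete_edge G (u v : X) : X -> X -> Prop :=
  fun a b => G a b /\ ~ ((a = u /\ b = v) \/ (a = v /\ b = u)).

Lemma induced_connected_clos_rt G A x y :
  induced_connected G A -> A x -> A y -> clos_refl_trans X G x y.
Proof.
  intros HA Ax Ay; apply clos_rt_mono with (2 := HA x y Ax Ay); tauto.
Qed.

Lemma induced_connected_delete_edge G A u v :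
  ~ (A u /\ A v) -> induced_connected G A ->
  induced_connected (delete_edge G u v) A.
Proof.
  intros Huv HA x y Ax Ay; apply clos_rt_mono with (2 := HA x y Ax Ay).
  intros a b [Gab [Aa Ab]]; repeat split; auto.
  intros [[-> ->] | [-> ->]]; tauto.
Qed.

Lemma boundary_le_delete_edge G B k u v :
  boundary G B (u, v) -> boundary_le G B (S k) ->
  boundary_le (delete_edge G u v) B k.
Proof.
  intros Huv [l [Hl Hcov]].
  destruct (in_split _ _ (Hcov _ Huv)) as [l1 [l2 ->]].
  exists (l1 ++ l2); split.
  - rewrite length_app in *; simpl in Hl; lia.
  - intros [a b] [[Gab Hab] Hcr]; simpl in *.
    assert (Hin : In (a, b) (l1 ++ (u, v) :: l2)) by (apply Hcov; split; auto).
    apply in_app_or in Hin as [Hin | [Heq | Hin]]; auto using in_or_app.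
    injection Heq as -> ->; tauto.
Qed.

Lemma neat_separation_delete_edge G k u v a b B :
  G u v -> neat_separation G (S k) u v B ->
  delete_edge G u v a b -> B a -> ~ B b ->
  neat_separation (delete_edge G u v) k a b B.
Proof.
  intros Guv [Bu [Bv [HB [HBc Hle]]]] Hab Ba Bb.
  repeat split; auto.
  - apply induced_connected_delete_edge; tauto.
  - apply induced_connected_delete_edge; unfold compl; tauto.
  - apply boundary_le_delete_edge; [repeat split |]; auto.
Qed.

Lemma neat_separation_other_boundary_edge G k u v B e :
  neat_separation G k u v B -> boundary G B e -> e <> (u, v) ->
  clos_refl_trans X (delete_edge G u v) u v.
Proof.
  destruct e as [a b]; intros [Bu [Bv [HB [HBc _]]]] [Gab [Ba Bb]] Hne.
  simpl in *.
  apply rt_trans with a; [| apply rt_trans with b].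
  - apply (induced_connected_clos_rt _ B); auto.
    apply induced_connected_delete_edge; tauto.
  - apply rt_step; split; auto.
    intros [[-> ->] | [-> ->]]; [apply Hne; reflexivity | contradiction].
  - apply (induced_connected_clos_rt _ (compl B)); auto.
    apply induced_connected_delete_edge; unfold compl; tauto.
Qed.

Lemma neat_separation_component G k u v B :
  ~ clos_refl_trans X (delete_edge G u v) u v ->
  neat_separation G k u v B ->
  forall x, B x <-> clos_refl_trans X (delete_edge G u v) u x.
Proof.
  intros Hno HsB; pose proof HsB as [Bu [Bv [HB _]]]; intros x; split.
  - intros Bx; apply (induced_connected_clos_rt _ B); auto.
    apply induced_connected_delete_edge; tauto.
  - intros Hux; apply NNPP; intros Bx.
    destruct (clos_rt_crossing_edges _ _ _ _ Hux) as [W [HW HWcross]].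
    destruct (HWcross B Bu Bx) as [[a b] [Hab [Ba Bb]]].
    destruct (HW _ Hab) as [Gab Hne]; simpl in *.
    apply Hno, (neat_separation_other_boundary_edge G k u v B (a, b)); auto.
    + repeat split; auto.
    + intros Heq; injection Heq as -> ->; tauto.
Qed.

Theorem neat_separations_finite k : forall G u v, G u v ->
  finite_family (neat_separation G k u v).
Proof.
  induction k as [| k IHk]; intros G u v Guv.
  - exists []; intros B [Bu [Bv [_ [_ [[| e l] [Hl Hcov]]]]]]; simpl in Hl.
    + exfalso; apply (Hcov (u, v)); repeat split; auto.
    + lia.
  - destruct (classic (clos_refl_trans X (delete_edge G u v) u v))
      as [Huv | Hno].
    + destruct (clos_rt_crossing_edges _ _ _ _ Huv) as [W [HW HWcross]].
      apply finite_family_mono with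
        (fun B => exists e, In e W /\
           neat_separation (delete_edge G u v) k (fst e) (snd e) B).
      * apply finite_family_list_union; intros e He.
        apply IHk, HW, He.
      * intros B HsB; pose proof HsB as [Bu [Bv _]].
        destruct (HWcross B Bu Bv) as [e [He [Be Be']]].
        exists e; split; auto.
        apply neat_separation_delete_edge; auto.
    + exists [fun x => clos_refl_trans X (delete_edge G u v) u x].
      intros B HsB; eexists; split; [left; reflexivity |].
      exact (neat_separation_component G (S k) u v B Hno HsB).
Qed.

Lemma C_k_neat_separation G k B u v :
  C_k G k B -> B u -> ~ B v -> neat_separation G k u v B.
Proof.
  intros [[_ [HB HBc]] [l [_ [Hl Hcov]]]] Bu Bv.
  repeat split; auto.
  exists l; split; [lia | intros e He; apply Hcov, He].
Qed.

Lemma induced_connected_meets_boundary G A B :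
  induced_connected G B ->
  (exists x, A x /\ B x) -> (exists y, ~ A y /\ B y) ->
  exists e, boundary G A e /\ B (fst e).
Proof.
  intros HB [x [Ax Bx]] [y [Ay By]].
  destruct (clos_rt_crossing_edges _ _ _ _ (HB x y Bx By))
    as [W [HW HWcross]].
  destruct (HWcross A Ax Ay) as [e [He [Ae Ae']]].
  destruct (HW e He) as [Ge [Be _]].
  exists e; repeat split; auto.
Qed.

Lemma not_nested_meets A B : ~ nested A B ->
  (exists x, A x /\ B x) /\ (exists x, A x /\ ~ B x) /\
  (exists x, ~ A x /\ B x) /\ (exists x, ~ A x /\ ~ B x).
Proof.
  unfold nested, empty_set; intros H.
  repeat split; apply NNPP; intros Hn; apply H; firstorder.
Qed.

End NeatSeparations.

Theorem mainTheorem17 (X : Type) (G : X -> X -> Prop)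
  (HG : is_graph G) (Hconn : connected G)
  (k : nat) (Hk : 1 <= k) (A : X -> Prop)
  (HA : finite_set (boundary G A)) :
  finite_family (N_k G k A).
Proof.
  destruct HA as [LA HLA].
  set (ends := map fst LA).
  destruct (clos_rt_crossing_edges_list X G (list_prod ends ends))
    as [W [HW HWcross]]; [intros p _; apply Hconn |].
  apply finite_family_mono with
    (fun B => exists e, In e W /\ neat_separation X G k (fst e) (snd e) B).
  { apply finite_family_list_union; intros e He.
    apply neat_separations_finite, HW, He. }
  intros B [HBk HAB].
  pose proof HBk as [[_ [HB HBc]] _].
  destruct (not_nested_meets X A B HAB) as [HAB1 [HAB2 [HAB3 HAB4]]].
  destruct (induced_connected_meets_boundary X G A B HB HAB1 HAB3)
    as [e1 [He1 Be1]].
  destruct (induced_connected_meets_boundary X G A (compl B) HBc HAB2 HAB4)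
    as [e2 [He2 Be2]].
  destruct (HWcross (fst e1, fst e2) B) as [f [Hf HBf]].
  { apply in_prod; apply in_map; apply HLA; assumption. }
  { split; assumption. }
  exists f; split; [exact Hf |].
  apply C_k_neat_separation; [exact HBk | apply HBf..].
Qed.
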